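(* Let $1\le k<n$, let $w=(y_1,\dots,y_{k-r},\overline{z_r},\dots,\overline{z_1},v_1,\dots,v_{n-k-1},\widehat{v_{n-k}})\in W^{OG(k,2n)}$ and $\lambda=\mathrm{Inv}(w)$. Then for $1\le i\le k$, \[\lambda^{(1)}_i=\begin{cases} n-k+|\{l: z_i<v_l\}| & \text{if } i\le r,\\ |\{l: y_{k+1-i}>v_l\}| & \text{if } i>r,\end{cases}\qquad \lambda^{(2)}_i=\begin{cases} |\{q: z_i<z_q\}|+|\{t: z_i<y_t\}| & \text{if } i\le r,\\ 0 & \text{if } i>r,\end{cases}\] and if $\lambda^{(1)}_i=n-k$ for some $i$, then $\lambda$ is assigned $\uparrow$ if $w$ is of type I and $\downarrow$ if $w$ is of type II.
   Context: Root system $D_n$: positive roots $e_a\pm e_b$ ($a<b$). $W^{OG(k,2n)}$ is the set of signed permutations $w=(y_1,\dots,y_{k-r},\overline{z_r},\dots,\overline{z_1},v_1,\dots,v_{n-k-1},\widehat{v_{n-k}})$ of $1,\dots,n$ with an even number of barred (negative) entries, $0\le r\le k$, $y_1<\dots<y_{k-r}$, $z_r>\dots>z_1$, $v_1<\dots<v_{n-k}$, $\widehat{v_{n-k}}\in\{v_{n-k},\overline{v_{n-k}}\}$ according to the parity of $r$; $w$ is of type I if $\widehat{v_{n-k}}=v_{n-k}$ and type II otherwise. The entry in position $k+1-i$ is $\overline{z_i}$ if $i\le r$ and $y_{k+1-i}$ if $i>r$. $w$ acts by $e_a\mapsto\pm e_{|w(a)|}$ (minus if barred) and $\mathrm{Inv}(w)$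 is the set of positive roots sent to negative roots. For a set $S$ of positive roots, $\lambda^{(1)}_i$ is the number of roots of $S$ among $e_{k+1-i}\pm e_b$, $b>k$, and $\lambda^{(2)}_i$ the number of roots of $S$ of the form $e_a+e_{k+1-i}$ with $a<k+1-i$. If $\lambda^{(1)}_i=n-k$ for some $i$, $S$ is assigned $\uparrow$ if it contains $e_{k+1-i}-e_n$ and $\downarrow$ if it contains $e_{k+1-i}+e_n$ (for such $i$). *)

(* Signed permutations of 1..n are encoded as sequences of
   nonzero integers of length n (entry at position a, 1-indexed, is w(a);
   a negative entry is a barred one). *)
From mathcomp Require Import all_boot all_order all_algebra.
Set Implicit Arguments. Unset Strict Implicit. Unset Printing Implicit Defensive.
Import Order.TTheory GRing.Theory Num.Theory.

Definition went (w : seq int) (a : nat) : int := nth 0%R w a.-1.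
Definition wabs (w : seq int) (a : nat) : nat := `|went w a|%N.
Definition wsgn (w : seq int) (a : nat) : int := sgz (went w a).

(* The element w of W^{OG(k,2n)}
     (y_1,..,y_{k-r}, zbar_r, .., zbar_1, v_1, .., v_{n-k-1}, vhat_{n-k})
   where vhat_{n-k} is barred iff r is odd (even number of bars). *)
Definition ogw (r : nat) (y z v : seq nat) : seq int :=
  map Posz y ++ rev (map (fun x : nat => (- (Posz x))%R) z)
  ++ map Posz (take (size v).-1 v)
  ++ [:: if odd r then (- (Posz (last 0%N v)))%R else Posz (last 0%N v)].

Definition typeI (n : nat) (w : seq int) : bool := (0 < went w n)%R.

(* Action of w on roots: e_a |-> wsgn a * e_{wabs a}.
   The positive root e_a + eps e_b (a < b; plus = true means eps = +1,
   plus = false means eps = -1) is sent to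
     wsgn a * e_{wabs a} + eps * wsgn b * e_{wabs b},
   which is a negative root iff its coefficient at the smaller index is negative. *)
Definition sent_negative (w : seq int) (a b : nat) (plus : bool) : bool :=
  if wabs w a < wabs w b then (wsgn w a < 0)%R
  else ((if plus then wsgn w b else - wsgn w b) < 0)%R.

Definition inInv (n : nat) (w : seq int) (a b : nat) (plus : bool) : bool :=
  [&& 1 <= a, a < b, b <= n & sent_negative w a b plus].

Definition lambda1 (n k : nat) (w : seq int) (i : nat) : nat :=
  count (fun b => k < b) [seq b <- iota 1 n | inInv n w (k.+1 - i) b false]
  + count (fun b => k < b) [seq b <- iota 1 n | inInv n w (k.+1 - i) b true].

Definition lambda2 (n k : nat) (w : seq int) (i : nat) : nat :=
  count (fun a => inInv n w a (k.+1 - i) true) (iota 1 n).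

Definition arrow_up (n k : nat) (w : seq int) (i : nat) : bool :=
  inInv n w (k.+1 - i) n false.
Definition arrow_down (n k : nat) (w : seq int) (i : nat) : bool :=
  inInv n w (k.+1 - i) n true.

From mathcomp Require Import all_boot all_order all_algebra zify.
Set Implicit Arguments. Unset Strict Implicit. Unset Printing Implicit Defensive.
Import Order.TTheory GRing.Theory Num.Theory.

(* Put p = k+1-i and a = |w(p)|; the entry w(p) is z_i, barred, when i <= r and
   y_{k+1-i}, unbarred, otherwise.  For b > k the two roots e_p - e_b and e_p + e_b
   are both inverted when a < |w(b)| and w(p) is barred, neither when a < |w(b)| and
   w(p) is unbarred, and exactly one of them when |w(b)| < a, whatever the signs;
   counting over the v_l gives lambda^(1)_i.  As the barred entries before position
   n form the block of z's, a root e_a + e_p with a < p is inverted only if w(p) is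
   barred, and then iff w(a) is barred or |w(a)| > |w(p)|; this gives lambda^(2)_i.
   Finally lambda^(1)_i = n-k forces |w(p)| >= v_{n-k} = |w(n)|, so the roots
   e_p -+ e_n are decided by the sign of w(n), i.e. by the type of w. *)

Lemma count_nth_iota (P : pred nat) s :
  count P s = count (fun l => P (nth 0 s l)) (iota 0 (size s)).
Proof. by rewrite -{1}(mkseq_nth 0 s) /mkseq count_map. Qed.

Lemma count_gt_nth_sorted s j : sorted ltn s -> j < size s ->
  count (fun x => nth 0 s j < x) s = size s - j.+1.
Proof.
move=> sorted_s lt_js; rewrite count_nth_iota.
rewrite (eq_in_count (a2 := fun l => j < l)); last first.
  move=> l; rewrite mem_iota add0n /= => lt_ls.
  case: (ltngtP j l) => [lt_jl|lt_lj|->]; last by rewrite ltnn.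
  - exact: (sorted_ltn_nth ltn_trans).
  - by apply/negbTE; rewrite -leqNgt ltnW // (sorted_ltn_nth ltn_trans).
rewrite -{1}(subnKC lt_js) iotaD count_cat.
rewrite (eq_in_count (a1 := fun l => j < l) (a2 := pred0)); last first.
  by move=> l; rewrite mem_iota add0n ltnS => /andP[_ le_lj]; rewrite ltnNge le_lj.
rewrite count_pred0 (eq_in_count (a2 := predT)) ?count_predT ?size_iota //.
by move=> l; rewrite mem_iota => /andP[].
Qed.

Lemma went_ogw_y r y z v p : p < size y ->
  went (ogw r y z v) p.+1 = Posz (nth 0 y p).
Proof. by move=> lt_py; rewrite /went /ogw /= nth_cat size_map lt_py (nth_map 0%N). Qed.

Lemma went_ogw_z r y z v p : p < size z ->
  went (ogw r y z v) (size y + p).+1 = (- Posz (nth 0 z (size z - p.+1)))%R.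
Proof.
move=> lt_pz; rewrite /went /ogw /= nth_cat size_map ltnNge leq_addr /= addKn.
rewrite nth_cat size_rev size_map lt_pz -map_rev (nth_map 0%N) ?size_rev //.
by rewrite nth_rev.
Qed.

Lemma went_ogw_v r y z v p : p < size v ->
  went (ogw r y z v) (size y + size z + p).+1 =
  ((if (p == (size v).-1) && odd r then -1 else 1) * Posz (nth 0 v p))%R.
Proof.
move=> lt_pv; rewrite /went /ogw /= nth_cat size_map -addnA ltnNge leq_addr /= addKn.
rewrite nth_cat size_rev size_map ltnNge leq_addr /= addKn.
have lt_last : (size v).-1 < size v by rewrite prednK // (leq_ltn_trans _ lt_pv).
rewrite nth_cat size_map size_take lt_last.
case: ltnP => [lt_p_last|le_last_p].
  by rewrite (nth_map 0%N) ?size_take ?lt_last // nth_take // (ltn_eqF lt_p_last) mul1r.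
have -> : p = (size v).-1 by apply/eqP; rewrite eqn_leq le_last_p -ltnS prednK // (leq_ltn_trans _ lt_pv).
by rewrite subnn eqxx nth_last; case: (odd r); rewrite ?mulN1r ?mul1r.
Qed.

Lemma wabs_Posz w p x : went w p = Posz x -> wabs w p = x.
Proof. by rewrite /wabs => ->. Qed.

Lemma wabs_Negz w p x : went w p = (- Posz x)%R -> wabs w p = x.
Proof. by rewrite /wabs => ->; rewrite abszN. Qed.

Lemma wsgn_Posz_lt0 w p x : went w p = Posz x -> (wsgn w p < 0)%R = false.
Proof. by rewrite /wsgn sgz_lt0 => ->. Qed.

Lemma wsgn_Negz_lt0 w p x : 0 < x -> went w p = (- Posz x)%R -> (wsgn w p < 0)%R.
Proof. by move=> x_gt0; rewrite /wsgn sgz_lt0 => ->; rewrite oppr_lt0 ltz_nat. Qed.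

Lemma wabs_signed w p x (b : bool) :
  went w p = ((if b then -1 else 1) * Posz x)%R -> wabs w p = x.
Proof. by rewrite /wabs => ->; case: b; rewrite ?mulN1r ?mul1r ?abszN. Qed.

Lemma wsgn_signed w p x (b : bool) : 0 < x ->
  went w p = ((if b then -1 else 1) * Posz x)%R -> wsgn w p = (if b then -1 else 1)%R.
Proof.
move=> x_gt0; rewrite /wsgn => ->; case: b; rewrite ?mulN1r ?mul1r.
  by rewrite ltr0_sgz // oppr_lt0 ltz_nat.
by rewrite gtr0_sgz // ltz_nat.
Qed.

Lemma sent_negative_either w a b : wsgn w b != 0%R ->
  sent_negative w a b false || sent_negative w a b true =
  (if wabs w a < wabs w b then (wsgn w a < 0)%R else true).
Proof.
move=> sgn_b_neq0; rewrite /sent_negative /=.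
case: (wabs w a < wabs w b); first by rewrite orbb.
by rewrite oppr_lt0 orbC -neq_lt.
Qed.

Lemma sent_negative_both w a b :
  sent_negative w a b false && sent_negative w a b true =
  (if wabs w a < wabs w b then (wsgn w a < 0)%R else false).
Proof.
rewrite /sent_negative /=; case: (wabs w a < wabs w b); first by rewrite andbb.
by rewrite oppr_lt0 lt_asym.
Qed.

Lemma lambda1_shift n k w i : 1 <= i <= k -> k < n ->
  lambda1 n k w i =
  count (fun l => sent_negative w (k.+1 - i) (k + l).+1 false) (iota 0 (n - k)) +
  count (fun l => sent_negative w (k.+1 - i) (k + l).+1 true) (iota 0 (n - k)).
Proof.
move=> /andP[i_gt0 le_ik] lt_kn; rewrite /lambda1 !count_filter.
have -> : iota 1 n = iota 1 k ++ map (addn k.+1) (iota 0 (n - k)).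
  by rewrite -iotaDl addn0 -iotaD subnKC // ltnW.
rewrite !count_cat !count_map.
have below_k pl : count (predI (fun b => k < b) (fun b => inInv n w (k.+1 - i) b pl))
                        (iota 1 k) = 0.
  rewrite (eq_in_count (a2 := pred0)) ?count_pred0 // => b.
  by rewrite mem_iota add1n ltnS /= => /andP[_ le_bk]; rewrite ltnNge le_bk.
rewrite !below_k !add0n.
congr (_ + _); apply: eq_in_count => l; rewrite mem_iota /= /inInv => lt_l.
all: have lt_pos : k.+1 - i < k.+1 + l by lia.
all: have le_n : k.+1 + l <= n by lia.
all: by rewrite ltn_addr // subn_gt0 ltnS le_ik lt_pos le_n addSn.
Qed.

Lemma lambda2_prefix n k w i : 1 <= i <= k -> k < n ->
  lambda2 n k w i = count (fun a => sent_negative w a (k.+1 - i) true) (iota 1 (k - i)).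
Proof.
move=> /andP[i_gt0 le_ik] lt_kn; rewrite /lambda2.
have -> : n = k - i + (n - (k - i)) by lia.
rewrite iotaD count_cat [X in _ + X](eq_in_count (a2 := pred0)) ?count_pred0 ?addn0.
  apply: eq_in_count => a; rewrite mem_iota => /andP[a_gt0 lt_a] /=.
  by rewrite /inInv a_gt0 /=; apply/and3P/idP => [[_ _ ->]|->] //; split; lia.
move=> a; rewrite mem_iota /inInv => /andP[le_a _] /=.
have -> : (a < k.+1 - i) = false by lia.
by rewrite andbF.
Qed.

Section OGWInversions.

Variables (n k r : nat) (y z v : seq nat).
Hypotheses (lt_kn : k < n) (le_rk : r <= k).
Hypotheses (size_y : size y = k - r) (size_z : size z = r) (size_v : size v = n - k).
Hypothesis sorted_z : sorted ltn z.
Hypothesis perm_yzv : perm_eq (y ++ z ++ v) (iota 1 n).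

Local Notation w := (ogw r y z v).

Lemma ogw_entry_gt0 x : x \in y ++ z ++ v -> 0 < x.
Proof. by rewrite (perm_mem perm_yzv) mem_iota => /andP[]. Qed.

Lemma ogw_y_notin_zv x : x \in y -> x \notin z ++ v.
Proof.
move: (perm_uniq perm_yzv); rewrite iota_uniq cat_uniq => /and3P[_ /hasPn y_zv _].
by move=> x_y; apply/negP => /y_zv /negP; apply.
Qed.

Lemma size_yz : size y + size z = k.
Proof. by rewrite size_y size_z subnK. Qed.

Lemma went_ogw_v_block l : l < n - k ->
  went w (k + l).+1 = ((if (l == (size v).-1) && odd r then -1 else 1) * Posz (nth 0 v l))%R.
Proof. by move=> lt_l; rewrite -size_yz went_ogw_v // size_v. Qed.

Lemma nth_v_gt0 l : l < n - k -> 0 < nth 0 v l.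
Proof. by move=> lt_l; apply: ogw_entry_gt0; rewrite !mem_cat mem_nth ?orbT ?size_v. Qed.

Lemma nth_z_gt0 j : j < r -> 0 < nth 0 z j.
Proof. by move=> lt_j; apply: ogw_entry_gt0; rewrite mem_cat orbC mem_cat mem_nth ?size_z. Qed.

Lemma lambda1_ogw i : 1 <= i <= k ->
  lambda1 n k w i =
  count (fun x => if wabs w (k.+1 - i) < x then (wsgn w (k.+1 - i) < 0)%R else true) v +
  count (fun x => if wabs w (k.+1 - i) < x then (wsgn w (k.+1 - i) < 0)%R else false) v.
Proof.
move=> le1ik; rewrite lambda1_shift // -count_predUI !(count_nth_iota _ v) size_v.
congr (_ + _); apply: eq_in_count => l; rewrite mem_iota add0n => /= lt_l;
  have went_l := went_ogw_v_block lt_l; rewrite -(wabs_signed went_l).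
  by rewrite sent_negative_either // (wsgn_signed (nth_v_gt0 lt_l) went_l); case: ifP.
by rewrite sent_negative_both.
Qed.

Lemma lambda1_ogw_barred i : 1 <= i <= k -> (wsgn w (k.+1 - i) < 0)%R ->
  lambda1 n k w i = n - k + count (fun x => wabs w (k.+1 - i) < x) v.
Proof.
move=> le1ik barred; rewrite lambda1_ogw // barred -size_v -(count_predT v).
by congr (_ + _); apply: eq_count => x; case: ifP.
Qed.

Lemma lambda1_ogw_unbarred i : 1 <= i <= k -> ~~ (wsgn w (k.+1 - i) < 0)%R ->
  wabs w (k.+1 - i) \notin v ->
  lambda1 n k w i = count (fun x => x < wabs w (k.+1 - i)) v.
Proof.
move=> le1ik /negbTE unbarred notin_v; rewrite lambda1_ogw // unbarred.
rewrite [X in _ + X](eq_count (a2 := pred0)) ?count_pred0 ?addn0; last by move=> x; case: ifP.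
apply: eq_in_count => x x_v /=; case: ltngtP => // eq_x.
by move: notin_v; rewrite eq_x x_v.
Qed.

Lemma went_ogw_last : went w n = ((if odd r then -1 else 1) * Posz (last 0 v))%R.
Proof.
have lt_last : (n - k).-1 < n - k by rewrite prednK ?subn_gt0.
have -> : n = (k + (n - k).-1).+1 by rewrite -addnS prednK ?subnKC ?subn_gt0 // ltnW.
by rewrite went_ogw_v_block // size_v eqxx -size_v nth_last.
Qed.

Lemma last_v_gt0 : 0 < last 0 v.
Proof. by rewrite -nth_last size_v nth_v_gt0 // prednK ?subn_gt0. Qed.

Lemma typeI_ogw : typeI n w = ~~ odd r.
Proof.
rewrite /typeI went_ogw_last.
by case: (odd r); rewrite ?mulN1r ?mul1r ?oppr_gt0 ltz_nat ?ltn0 ?last_v_gt0.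
Qed.

Lemma lambda1_ogw_full i : 1 <= i <= k -> lambda1 n k w i = n - k ->
  last 0 v <= wabs w (k.+1 - i).
Proof.
move=> le1ik; rewrite lambda1_ogw // -size_v leqNgt => full; apply/negP => lt_last.
have last_v : last 0 v \in v by rewrite -nth_last mem_nth // size_v prednK ?subn_gt0.
move: full; apply/eqP; case: (wsgn w (k.+1 - i) < 0)%R.
  rewrite (eq_count (a2 := predT)) ?count_predT; last by move=> x; case: ifP.
  rewrite -[X in _ != X]addn0 eqn_add2l -lt0n -has_count.
  by apply/hasP; exists (last 0 v); rewrite ?lt_last.
rewrite [X in _ + X](eq_count (a2 := pred0)) ?count_pred0 ?addn0; last by move=> x; case: ifP.
by rewrite -all_count; apply/allPn; exists (last 0 v); rewrite ?lt_last.
Qed.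

Lemma ogw_arrows i : 1 <= i <= k -> last 0 v <= wabs w (k.+1 - i) ->
  if typeI n w then arrow_up n k w i && ~~ arrow_down n k w i
  else arrow_down n k w i && ~~ arrow_up n k w i.
Proof.
move=> /andP[i_gt0 le_ik] le_last.
rewrite typeI_ogw /arrow_up /arrow_down /inInv /sent_negative (wabs_signed went_ogw_last).
rewrite (wsgn_signed last_v_gt0 went_ogw_last) leqnn (leq_gtF le_last).
have -> : 0 < k.+1 - i by rewrite subn_gt0 ltnS.
have -> : k.+1 - i < n by lia.
by case: (odd r).
Qed.

Lemma went_ogw_unbarred i : r < i <= k -> went w (k.+1 - i) = Posz (nth 0 y (k - i)).
Proof. by move=> /andP[lt_ri le_ik]; rewrite subSn // went_ogw_y // size_y; lia. Qed.

Lemma went_ogw_barred i : 1 <= i <= r -> went w (k.+1 - i) = (- Posz (nth 0 z i.-1))%R.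
Proof.
move=> /andP[i_gt0 le_ir].
have -> : k.+1 - i = (size y + (r - i)).+1 by rewrite size_y; lia.
rewrite went_ogw_z size_z; last lia.
by have -> : r - (r - i).+1 = i.-1 by lia.
Qed.

Lemma wsgn_ogw_z_lt0 p : size y < p <= k -> (wsgn w p < 0)%R.
Proof.
move=> /andP[lt_yp le_pk]; have lt_q : p.-1 - size y < size z by rewrite size_z; lia.
have -> : p = (size y + (p.-1 - size y)).+1 by lia.
by rewrite (wsgn_Negz_lt0 _ (went_ogw_z r y v lt_q)) // nth_z_gt0 // -size_z ltn_subrL (leq_ltn_trans _ lt_q).
Qed.

Lemma lambda2_ogw_unbarred i : r < i <= k -> lambda2 n k w i = 0.
Proof.
move=> /andP[lt_ri le_ik]; rewrite lambda2_prefix ?le_ik ?andbT ?(leq_ltn_trans _ lt_ri) //.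
rewrite (eq_in_count (a2 := pred0)) ?count_pred0 // => a; rewrite mem_iota => /andP[a_gt0 lt_a].
have went_a : went w a = Posz (nth 0 y a.-1).
  by rewrite -{1}(prednK a_gt0) went_ogw_y // size_y; lia.
rewrite /sent_negative (wsgn_Posz_lt0 went_a).
by rewrite (wsgn_Posz_lt0 (went_ogw_unbarred _)) ?lt_ri //; case: ifP.
Qed.

Lemma lambda2_ogw_barred i : 1 <= i <= r ->
  lambda2 n k w i = count (fun x => nth 0 z i.-1 < x) z + count (fun x => nth 0 z i.-1 < x) y.
Proof.
move=> /andP[i_gt0 le_ir]; rewrite lambda2_prefix ?i_gt0 ?(leq_trans le_ir) //.
set Z := nth 0 z i.-1; have went_p : went w (k.+1 - i) = (- Posz Z)%R.
  by apply: went_ogw_barred; rewrite i_gt0.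
have Z_gt0 : 0 < Z by rewrite nth_z_gt0 // prednK.
have -> : k - i = size y + (r - i) by rewrite size_y; lia.
rewrite iotaD count_cat [RHS]addnC; congr (_ + _).
  have -> : iota 1 (size y) = map (addn 1) (iota 0 (size y)) by rewrite -iotaDl.
  rewrite (count_nth_iota _ y) count_map; apply: eq_in_count => t.
  rewrite mem_iota add0n => /andP[_ lt_t] /=.
  have went_t : went w (1 + t) = Posz (nth 0 y t) by rewrite add1n went_ogw_y.
  rewrite /sent_negative (wabs_Posz went_t) (wabs_Negz went_p) (wsgn_Posz_lt0 went_t).
  rewrite (wsgn_Negz_lt0 Z_gt0 went_p).
  case: ltngtP => // eq_yZ; have := ogw_y_notin_zv (mem_nth 0 lt_t).
  by rewrite eq_yZ mem_cat mem_nth // size_z; lia.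
have lt_iz : i.-1 < size z by rewrite size_z; lia.
rewrite count_gt_nth_sorted // size_z.
rewrite (eq_in_count (a2 := predT)) ?count_predT ?size_iota; last first.
  move=> a; rewrite mem_iota => le_a.
  by rewrite /sent_negative wsgn_ogw_z_lt0 ?(wsgn_Negz_lt0 Z_gt0 went_p); [case: ifP | lia].
by rewrite prednK.
Qed.

Lemma ogw_inversions i : 1 <= i <= k ->
  lambda1 n k w i =
    (if i <= r then n - k + count (fun x => nth 0 z i.-1 < x) v
     else count (fun x => x < nth 0 y (k - i)) v)
  /\ lambda2 n k w i =
    (if i <= r then count (fun x => nth 0 z i.-1 < x) z + count (fun x => nth 0 z i.-1 < x) y
     else 0)
  /\ (lambda1 n k w i = n - k ->
      if typeI n w then arrow_up n k w i && ~~ arrow_down n k w i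
      else arrow_down n k w i && ~~ arrow_up n k w i).
Proof.
move=> le1ik; have [i_gt0 le_ik] := andP le1ik.
split; [|split]; last by move=> /(lambda1_ogw_full le1ik); apply: ogw_arrows.
  case: leqP => [le_ir | lt_ri].
    have le1ir : 1 <= i <= r by rewrite i_gt0.
    have went_p := went_ogw_barred le1ir.
    by rewrite lambda1_ogw_barred ?(wabs_Negz went_p) // (wsgn_Negz_lt0 _ went_p) ?nth_z_gt0 ?prednK.
  have ltirk : r < i <= k by rewrite lt_ri.
  have went_p := went_ogw_unbarred ltirk.
  rewrite lambda1_ogw_unbarred ?(wabs_Posz went_p) ?(wsgn_Posz_lt0 went_p) //.
  have y_p : nth 0 y (k - i) \in y by rewrite mem_nth // size_y; lia.
  by apply/negP => v_p; have := ogw_y_notin_zv y_p; rewrite mem_cat v_p orbT.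
case: leqP => [le_ir | lt_ri].
  by apply: lambda2_ogw_barred; rewrite i_gt0.
by apply: lambda2_ogw_unbarred; rewrite lt_ri.
Qed.

End OGWInversions.

Theorem lemma3p14 (n k r : nat) (y z v : seq nat) :
  1 <= k -> k < n -> r <= k ->
  size y = k - r -> size z = r -> size v = n - k ->
  sorted ltn y -> sorted ltn z -> sorted ltn v ->
  perm_eq (y ++ z ++ v) (iota 1 n) ->
  let w := ogw r y z v in
  forall i : nat, 1 <= i <= k ->
    lambda1 n k w i =
      (if i <= r then n - k + count (fun x => nth 0 z i.-1 < x) v
       else count (fun x => x < nth 0 y (k - i)) v)
    /\ lambda2 n k w i =
      (if i <= r then count (fun x => nth 0 z i.-1 < x) z
                      + count (fun x => nth 0 z i.-1 < x) y
       else 0)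
    /\ (lambda1 n k w i = n - k ->
        if typeI n w then arrow_up n k w i && ~~ arrow_down n k w i
        else arrow_down n k w i && ~~ arrow_up n k w i).
Proof.
move=> _ lt_kn le_rk size_y size_z size_v _ sorted_z _ perm_yzv w i.
exact: ogw_inversions.
Qed.
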